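(* Let $K$ be a Noetherian $\Sigma$-pseudofield such that $C:=K^\sigma$ is a $\Sigma_1$-closed pseudofield, let $A\in\mathrm{GL}_n(K)$, let $L$ be a Picard–Vessiot pseudofield for $\sigma Y=AY$ over $K$ with fundamental matrix $F$, and let $G=\mathrm{Aut}_\Sigma(L/K)\subseteq\mathrm{GL}_n(C)$ be its Galois group. If $H$ is a closed subgroup of $G$ with $L^H=K$, then $H=G$.
   Context: All rings are commutative with $1$. Fix $\Sigma_0=\mathbb Z$ with generator $\sigma$, a finite abelian group $\Sigma_1=\mathbb Z/t_1\mathbb Z\oplus\dots\oplus\mathbb Z/t_s\mathbb Z$ ($t_i\ge2$), and $\Sigma=\Sigma_0\oplus\Sigma_1$. For a subgroup $\Sigma'\subseteq\Sigma$, a $\Sigma'$-ring is a ring with an action of $\Sigma'$ by ring automorphisms; $\Sigma'$-ideals are $\Sigma'$-stable ideals; $K^\sigma$ is the ring of $\sigma$-invariants. A $\Sigma'$-ring is $\Sigma'$-simple if its only $\Sigma'$-ideals are $0$ and itself ($\neq0$). A ring is absolutely flat if every module over it is flat. A $\Sigma'$-pseudofield is an absolutely flat $\Sigma'$-simple ring; Noetherian if it is a Noetherian ring. A $\Sigma_1$-pseudofield $C$ is $\Sigma_1$-closed if $\sqrt I=\mathbb I(\mathbb V(I))$ for every $m$ and every $\Sigma_1$-ideal $I$ of $C\{y_1,\dots,y_m\}_{\Sigma_1}$ (polynomial ring in indeterminates $\tau y_i$, $\tau\in\Sigma_1$), with $\mathbb V$ the common zero set and $\mathbb I$ the ideal of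 vanishing polynomials. A Picard–Vessiot pseudofield for $\sigma Y=AY$ is a Noetherian $\Sigma$-pseudofield $L$ containing $K$ as a $\Sigma$-subring such that there is $F\in\mathrm{GL}_n(L)$ with $\sigma(F)=AF$, $L^\sigma=K^\sigma$, and $L$ is generated over $K$ by the entries of $F$. $\mathrm{Aut}_\Sigma(L/K)$ is the group of $\Sigma$-automorphisms of $L$ fixing $K$ pointwise, embedded in $\mathrm{GL}_n(C)$ by $\gamma\mapsto F^{-1}\gamma(F)$. A subgroup $H\subseteq G$ is closed if it is the set of $M\in G$ at which all elements of some set $E\subseteq C\{x_{ij},1/\det X\}_{\Sigma_1}$ vanish (with $\tau x_{ij}$ evaluated as $\tau(M_{ij})$). *)

From HB Require Import structures.
From mathcomp Require Import all_boot all_order all_algebra all_fingroup.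
From mathcomp Require Import mpoly.
Unset Printing Implicit Defensive.
Import GRing.Theory.
Local Open Scope ring_scope.

(* Sigma_0 = Z is generated by sigma; Sigma_1 is an arbitrary finite abelian
   group gT (every such group is a direct sum of cyclic groups Z/t_i, t_i>=2).
   Actions by ring automorphisms are given by a ring endomorphism sigma
   (required bijective) and a group action act : gT -> {rmorphism R -> R}. *)

Definition nvars (gT : finGroupType) (m : nat) := #|{: 'I_m * gT}|.
Definition nmvars (gT : finGroupType) (n : nat) := #|{: 'I_n * 'I_n * gT}|.

Section Defs.
Context {gT : finGroupType}.

Definition is_raut {R : comNzRingType} (f : R -> R) :=
  [/\ f 1 = 1, {morph f : x y / x + y}, {morph f : x y / x * y} & bijective f].

Definition is_Sig1_action {R : comNzRingType} (act : gT -> {rmorphism R -> R}) :=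
  (forall g, bijective (act g)) /\ (forall x, act 1%g x = x) /\
  (forall g h x, act (g * h)%g x = act g (act h x)).

Definition is_Sig_action {R : comNzRingType} (sigma : {rmorphism R -> R})
    (act : gT -> {rmorphism R -> R}) :=
  [/\ bijective sigma, is_Sig1_action act &
      forall g x, sigma (act g x) = act g (sigma x)].

Definition is_ideal {R : comNzRingType} (I : R -> Prop) :=
  [/\ I 0, (forall x y, I x -> I y -> I (x + y)) & (forall a x, I x -> I (a * x))].

Definition is_Sig1_ideal {R : comNzRingType} (act : gT -> {rmorphism R -> R})
    (I : R -> Prop) :=
  is_ideal I /\ forall g x, I x -> I (act g x).

Definition is_Sig_ideal {R : comNzRingType} (sigma : {rmorphism R -> R})
    (act : gT -> {rmorphism R -> R}) (I : R -> Prop) :=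
  [/\ is_Sig1_ideal act I, (forall x, I x -> I (sigma x)) &
      (forall x, I (sigma x) -> I x)].

Definition trivial_or_full {R : comNzRingType} (I : R -> Prop) :=
  (forall x, I x -> x = 0) \/ (forall x, I x).

Definition Sig1_simple {R : comNzRingType} (act : gT -> {rmorphism R -> R}) :=
  (1 : R) != 0 /\ forall I, is_Sig1_ideal act I -> trivial_or_full I.

Definition Sig_simple {R : comNzRingType} (sigma : {rmorphism R -> R})
    (act : gT -> {rmorphism R -> R}) :=
  (1 : R) != 0 /\ forall I, is_Sig_ideal sigma act I -> trivial_or_full I.

(* absolutely flat = von Neumann regular *)
Definition absolutely_flat (R : comNzRingType) := forall a : R, exists b, a = a * a * b.

Definition noetherian (R : comNzRingType) :=
  forall I : R -> Prop, is_ideal I ->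
  exists s : seq R, forall x, I x <->
    exists c : 'I_(size s) -> R, x = \sum_(i < size s) c i * s`_i.

Definition Sig1_pseudofield {R : comNzRingType} (act : gT -> {rmorphism R -> R}) :=
  absolutely_flat R /\ Sig1_simple act.

Definition Sig_pseudofield {R : comNzRingType} (sigma : {rmorphism R -> R})
    (act : gT -> {rmorphism R -> R}) :=
  absolutely_flat R /\ Sig_simple sigma act.

(* The Sigma_1-polynomial ring C{y_1..y_m}_{Sigma_1}: variables tau y_j are
   indexed by pairs (j, tau) : 'I_m * gT, encoded in 'I_(nvars gT m). *)

Definition var_shift (m : nat) (g : gT) (v : 'I_(nvars gT m)) : 'I_(nvars gT m) :=
  enum_rank ((enum_val v).1, (g * (enum_val v).2)%g).

(* action of g on C{y}: on coefficients, and tau y_j |-> (g tau) y_j *)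
Definition act_poly {C : comNzRingType} (act : gT -> {rmorphism C -> C}) (m : nat)
    (g : gT) (p : {mpoly C[nvars gT m]}) : {mpoly C[nvars gT m]} :=
  mmap ((@mpolyC _ C) \o act g) (fun v => 'X_(var_shift m g v)) p.

(* evaluation at a point c in C^m: tau y_j |-> tau (c_j) *)
Definition eval_pt {C : comNzRingType} (act : gT -> {rmorphism C -> C}) (m : nat)
    (c : 'I_m -> C) (p : {mpoly C[nvars gT m]}) : C :=
  p.@[fun v => act (enum_val v).2 (c (enum_val v).1)].

Definition rad {R : comNzRingType} (I : R -> Prop) : R -> Prop :=
  fun x => exists k, I (x ^+ k).

Definition Sig1_closed {C : comNzRingType} (act : gT -> {rmorphism C -> C}) :=
  Sig1_pseudofield act /\
  forall (m : nat) (I : {mpoly C[nvars gT m]} -> Prop),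
    is_Sig1_ideal (fun g => act_poly act m g) I ->
    forall p, rad I p <->
      (forall c : 'I_m -> C, (forall q, I q -> eval_pt act m c q = 0) ->
         eval_pt act m c p = 0).

Definition is_GL {R : comNzRingType} {n : nat} (A : 'M[R]_n) :=
  exists B : 'M[R]_n, A *m B = 1%:M /\ B *m A = 1%:M.

(* L is generated over phi(K) by the entries of F as a Sigma-pseudofield:
   every subset containing phi(K) and the entries of F that is closed under
   ring operations, sigma, sigma^{-1}, Sigma_1 and quasi-inverses is all of L *)
Definition pseudofield_generated {K L : comNzRingType} (phi : K -> L)
    (sigma : {rmorphism L -> L}) (act : gT -> {rmorphism L -> L})
    {n : nat} (F : 'M[L]_n) :=
  forall S : L -> Prop,
    (forall y, S (phi y)) -> (forall i j, S (F i j)) ->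
    (forall x y, S x -> S y -> S (x + y)) ->
    (forall x, S x -> S (- x)) ->
    (forall x y, S x -> S y -> S (x * y)) ->
    (forall x, S x -> S (sigma x)) -> (forall x, S (sigma x) -> S x) ->
    (forall g x, S x -> S (act g x)) ->
    (forall a b, S a -> a = a * a * b -> b = b * b * a -> S b) ->
    forall x, S x.

Definition is_PV_pseudofield {K L : comNzRingType}
    (sigmaK : {rmorphism K -> K}) (actK : gT -> {rmorphism K -> K})
    (sigmaL : {rmorphism L -> L}) (actL : gT -> {rmorphism L -> L})
    (phi : {rmorphism K -> L}) {n : nat} (A : 'M[K]_n) (F : 'M[L]_n) :=
  [/\ is_Sig_action sigmaL actL, Sig_pseudofield sigmaL actL & noetherian L] /\
  [/\ injective phi, (forall x, phi (sigmaK x) = sigmaL (phi x)) &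
      (forall g x, phi (actK g x) = actL g (phi x))] /\
  (is_GL F /\ map_mx sigmaL F = map_mx phi A *m F) /\
  (forall x : L, sigmaL x = x -> exists y : K, sigmaK y = y /\ x = phi y) /\
  pseudofield_generated phi sigmaL actL F.

Definition is_Sig_aut_over {K L : comNzRingType} (phi : K -> L)
    (sigmaL : {rmorphism L -> L}) (actL : gT -> {rmorphism L -> L}) (gam : L -> L) :=
  [/\ is_raut gam, (forall x, gam (sigmaL x) = sigmaL (gam x)),
      (forall g x, gam (actL g x) = actL g (gam x)) & (forall y, gam (phi y) = phi y)].

(* gam corresponds to M in GL_n(C) under gam |-> F^{-1} gam(F), i.e. gam(F) = F M
   (C embedded into L by phi \o iota) *)
Definition aut_matrix {C L : comNzRingType} (j : C -> L) {n : nat} (F : 'M[L]_n)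
    (gam : L -> L) (M : 'M[C]_n) :=
  map_mx gam F = F *m map_mx j M.

(* closed subsets of GL_n(C): variables tau x_{ij}, indexed by ('I_n * 'I_n * gT) *)

Definition eval_mx {C : comNzRingType} (act : gT -> {rmorphism C -> C}) {n : nat}
    (M : 'M[C]_n) (p : {mpoly C[nmvars gT n]}) : C :=
  p.@[fun v => let: (i, j, g) := enum_val v in act g (M i j)].

End Defs.

From HB Require Import structures.
From mathcomp Require Import all_boot all_order all_algebra all_fingroup.
From mathcomp Require Import mpoly.
From mathcomp Require Import ring zify.
Import GRing.Theory.
Local Open Scope ring_scope.

(* Let M be in G and p an equation of H.  Using F^-1, p(X) = f(F X) for a
   polynomial f over L.  The coefficient vectors (on the support of f) of the
   polynomials vanishing on F H form an L-submodule W of L^k, stable under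
   every automorphism gam in H because gam(F N) = F M_gam N.  Over a Noetherian
   absolutely flat ring such a module is spanned by gam-invariant vectors
   (Galois descent, via idempotent generators of the ideals of leading
   coefficients).  Their entries lie in L^H = K, so they are fixed by the
   automorphism of M; since F 1 lies in F H, this gives f(F M) = 0, i.e.
   p(M) = 0. *)

Lemma raut_nmod_morphism {R : comNzRingType} {g : R -> R} :
  is_raut g -> nmod_morphism g.
Proof.
case=> _ gD _ _; split=> //.
by apply: (@addrI _ (g 0)); rewrite -gD !addr0.
Qed.

Lemma raut_monoid_morphism {R : comNzRingType} {g : R -> R} :
  is_raut g -> monoid_morphism g.
Proof. by case=> g1 _ gM _; split. Qed.

Definition raut_rmorphism {R : comNzRingType} {g : R -> R} (hg : is_raut g) :
    {rmorphism R -> R} :=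
  HB.pack g (GRing.isNmodMorphism.Build R R g (raut_nmod_morphism hg))
            (GRing.isMonoidMorphism.Build R R g (raut_monoid_morphism hg)).

Lemma raut0 {R : comNzRingType} {g : R -> R} : is_raut g -> g 0 = 0.
Proof. by move=> hg; exact: (rmorph0 (raut_rmorphism hg)). Qed.

Lemma raut_map_mx0 {R : comNzRingType} {g : R -> R} {m n} :
  is_raut g -> map_mx g 0 = 0 :> 'M_(m, n).
Proof. by move=> hg; apply/matrixP => i j; rewrite !mxE raut0. Qed.

Lemma raut_map_mxM {R : comNzRingType} {g : R -> R} {m n p}
    (A : 'M[R]_(m, n)) (B : 'M[R]_(n, p)) :
  is_raut g -> map_mx g (A *m B) = map_mx g A *m map_mx g B.
Proof. by move=> hg; exact: (map_mxM (raut_rmorphism hg)). Qed.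

Lemma raut_map_mx_inj {R : comNzRingType} {g : R -> R} {m n} :
  is_raut g -> injective (map_mx g : 'M_(m, n) -> 'M_(m, n)).
Proof.
case=> _ _ _ /bij_inj g_inj A B /matrixP eqAB.
by apply/matrixP => i j; apply: g_inj; have := eqAB i j; rewrite !mxE.
Qed.

(* If [e] is an idempotent unit for [s] and [a = a^2 b], then [f := ab] is an
   idempotent unit for [a], and [e + f - ef] is one for [a :: s]. *)
Lemma absolutely_flat_seq_idempotent (R : comNzRingType) (I : R -> Prop)
    (s : seq R) :
  absolutely_flat R -> is_ideal I -> (forall x, x \in s -> I x) ->
  exists e, [/\ I e, e * e = e & forall x, x \in s -> x = x * e].
Proof.
move=> Rflat [I0 ID IM]; elim: s => [|a s IHs] sI.
  by exists 0; split => //; rewrite mulr0.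
have [e [Ie ee es]] := IHs (fun x xs => sI x (mem_behead (s := a :: s) xs)).
have [b ab] := Rflat a.
have Ia : I a by apply: sI; rewrite inE eqxx.
pose f := a * b.
have If : I f by rewrite /f mulrC; apply: IM.
have ff : f * f = f by rewrite /f mulrA -[a * b * a]mulrA [b * a]mulrC mulrA -ab.
have af : a * f = a by rewrite /f mulrA -ab.
exists (e + f - e * f); split.
- by apply: (ID (e + f)); [exact: ID | rewrite -mulN1r mulrA; apply: IM].
- by ring: ee ff.
- move=> x; rewrite inE => /orP[/eqP -> | xs]; first by ring: af.
  have xe := es x xs.
  by rewrite mulrBr mulrDr [x * (e * f)]mulrA -xe addrK.
Qed.

Lemma noetherian_idempotent_generator (R : comNzRingType) (I : R -> Prop) :
  absolutely_flat R -> noetherian R -> is_ideal I ->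
  exists e, [/\ I e, e * e = e & forall x, I x -> x = x * e].
Proof.
move=> Rflat Rnoeth hI; have [s sgen] := Rnoeth I hI.
have sI x : x \in s -> I x.
  move=> xs; apply/sgen; exists (fun j => ((j : nat) == index x s)%:R).
  have xi : (index x s < size s)%N by rewrite index_mem.
  rewrite (bigD1 (Ordinal xi)) //= eqxx mul1r nth_index //.
  rewrite big1 ?addr0 // => j /negbTE; rewrite -val_eqE /= => ->.
  by rewrite mul0r.
have [e [Ie ee es]] := @absolutely_flat_seq_idempotent R I s Rflat hI sI.
exists e; split => // x /sgen[c ->]; rewrite mulr_suml; apply: eq_bigr => i _.
by rewrite -mulrA -es // mem_nth.
Qed.

Lemma ord_ltn_ind k (P : 'I_k -> Prop) :
  (forall j : 'I_k, (forall i : 'I_k, (i < j)%N -> P i) -> P j) -> forall j, P j.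
Proof.
move=> IH j; have [t] := ubnP j; elim: t j => // t IHt j jt.
by apply: IH => i ij; apply: IHt; lia.
Qed.

Lemma ord_gtn_ind k (P : 'I_k -> Prop) :
  (forall j : 'I_k, (forall i : 'I_k, (j < i)%N -> P i) -> P j) -> forall j, P j.
Proof.
move=> IH j; have [t] := ubnP (k - j); elim: t j => // t IHt j jt.
by apply: IH => i ij; apply: IHt; have := ltn_ord i; lia.
Qed.

Section GaloisDescent.

Variables (L : comNzRingType) (k : nat).
Variables (Gam : (L -> L) -> Prop) (W : 'rV[L]_k -> Prop).
Hypotheses (Lflat : absolutely_flat L) (Lnoeth : noetherian L).
Hypotheses (W0 : W 0) (WD : forall u v, W u -> W v -> W (u + v))
  (WZ : forall a u, W u -> W (a *: u)).
Hypothesis Gam_raut : forall {g}, Gam g -> is_raut g.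
Hypothesis W_Gam : forall {g} u, Gam g -> W u <-> W (map_mx g u).

Lemma WB u v : W u -> W v -> W (u - v).
Proof. by move=> Wu Wv; apply: WD => //; rewrite -scaleN1r; apply: WZ. Qed.

Definition supp_le (u : 'rV[L]_k) (m : nat) :=
  forall j : 'I_k, (m < j)%N -> u ord0 j = 0.

Definition lead_ideal (m : 'I_k) (a : L) :=
  exists u, [/\ W u, supp_le u m & u ord0 m = a].

Lemma lead_ideal_is_ideal m : is_ideal (lead_ideal m).
Proof.
split.
- by exists 0; split => [|j _|]; rewrite ?mxE.
- move=> _ _ [u [Wu su <-]] [v [Wv sv <-]]; exists (u + v).
  by split=> [|j mj|]; rewrite ?mxE ?(su j mj) ?(sv j mj) ?addr0 //; apply: WD.
- move=> a _ [u [Wu su <-]]; exists (a *: u).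
  by split=> [|j mj|]; rewrite ?mxE ?(su j mj) ?mulr0 //; apply: WZ.
Qed.

Lemma lead_ideal_Gam g m a : Gam g -> lead_ideal m (g a) <-> lead_ideal m a.
Proof.
move=> Gg; have gaut := Gam_raut Gg; have g0 := raut0 gaut.
have [_ _ _ [g' gK Kg]] := gaut.
split=> [[u [Wu su ua]] | [u [Wu su ua]]].
- exists (map_mx g' u); split.
  + apply/(W_Gam _ Gg); suff -> : map_mx g (map_mx g' u) = u by [].
    by apply/matrixP => i j; rewrite !mxE Kg.
  + by move=> j mj; rewrite mxE su // -{1}g0 gK.
  + by rewrite mxE ua gK.
- exists (map_mx g u); split; first exact: (W_Gam _ Gg).1.
  + by move=> j mj; rewrite mxE su.
  + by rewrite mxE ua.
Qed.

Section Reduced.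

Variable e : 'I_k -> L.
Hypothesis e_lead : forall m, lead_ideal m (e m).
Hypothesis e_idem : forall m, e m * e m = e m.
Hypothesis e_gen : forall m x, lead_ideal m x -> x = x * e m.

Lemma lead_idempotent_fixed g m : Gam g -> g (e m) = e m.
Proof.
move=> Gg; have [_ _ gM [g' gK Kg]] := Gam_raut Gg.
have /e_gen ge : lead_ideal m (g (e m)) by apply/(lead_ideal_Gam _ _ _ Gg).
have /e_gen/(congr1 g) : lead_ideal m (g' (e m)).
  by apply/(lead_ideal_Gam _ _ _ Gg); rewrite Kg.
rewrite gM !Kg => eg.
by rewrite ge mulrC -eg.
Qed.

(* A normal form: unique, hence Gam-invariant, and the reduced vectors span W. *)
Definition reduced (m : 'I_k) (u : 'rV[L]_k) :=
  [/\ W u, supp_le u m, u ord0 m = e m &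
      forall j : 'I_k, (j < m)%N -> u ord0 j * e j = 0].

Lemma reduced_unique m u v : reduced m u -> reduced m v -> u = v.
Proof.
move=> [Wu su um ru] [Wv sv vm rv]; apply/eqP; rewrite -subr_eq0; apply/eqP.
apply/rowP; elim/ord_gtn_ind => j IHj; rewrite !mxE.
case: (ltngtP m j) => [mj | jm | /val_inj <-]; last by rewrite um vm subrr.
  by rewrite su // sv // subrr.
have : lead_ideal j ((u - v) ord0 j).
  by exists (u - v); split => // [|i ji]; [exact: WB | rewrite IHj // mxE].
by move/e_gen; rewrite !mxE mulrBl ru // rv // subrr.
Qed.

Lemma reduced_fixed g m u : Gam g -> reduced m u -> map_mx g u = u.
Proof.
move=> Gg redu; apply: (reduced_unique m) => //.
have [_ _ gM _] := Gam_raut Gg; have g0 := raut0 (Gam_raut Gg).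
case: redu => Wu su um ru; split.
- exact: (W_Gam _ Gg).1.
- by move=> j mj; rewrite mxE su.
- by rewrite mxE um lead_idempotent_fixed.
- by move=> j jm; rewrite mxE -(lead_idempotent_fixed _ j Gg) -gM ru.
Qed.

Lemma reduced_exists m : exists u, reduced m u.
Proof.
elim/ord_ltn_ind: m => m IHm.
have /fin_all_exists[U redU] : forall j : 'I_k, exists u, (j < m)%N -> reduced j u.
  move=> j; case: (ltnP j m) => [/IHm[u redu] | _]; last by exists 0.
  by exists u.
suff clear_below : forall s, exists v, [/\ W v, supp_le v m, v ord0 m = e m &
    forall j : 'I_k, (m - s <= j < m)%N -> v ord0 j * e j = 0].
  have [v [Wv sv vm rv]] := clear_below m.
  by exists v; split => // j jm; apply: rv; rewrite subnn.
elim=> [|s [v [Wv sv vm rv]]].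
  have [u [Wu su um]] := e_lead m; exists u; split => // j; lia.
case: (leqP m s) => [ms | sm].
  by exists v; split => // j /andP[_ jm]; apply: rv; lia.
have j0k : (m - s.+1 < k)%N by have := ltn_ord m; lia.
pose j0 := Ordinal j0k; have j0E : (j0 : nat) = (m - s.+1)%N by [].
have j0m : (j0 < m)%N by lia.
have [_ sU Uj0 _] := redU j0 j0m.
exists (v - v ord0 j0 *: U j0); split.
- by apply: WB => //; apply: WZ; case: (redU j0 j0m).
- by move=> j mj; rewrite !mxE (sv j) // (sU j) ?mulr0 ?subr0 //; lia.
- by rewrite !mxE vm sU ?mulr0 ?subr0.
- move=> j /andP[lej jm]; rewrite !mxE.
  case: (ltnP j0 j) => [j0j | jj0].
    by rewrite (sU j) // mulr0 subr0 rv //; lia.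
  have -> : j = j0 by apply: val_inj => /=; lia.
  by rewrite Uj0 mulrBl -mulrA e_idem subrr.
Qed.

Lemma reduced_span (R : 'I_k -> 'rV[L]_k) :
  (forall m, reduced m (R m)) ->
  forall u, W u -> exists a : 'I_k -> L, u = \sum_m a m *: R m.
Proof.
move=> redR u Wu; suff span_lt : forall t u, W u ->
    (forall j : 'I_k, (t <= j)%N -> u ord0 j = 0) ->
    exists a : 'I_k -> L, u = \sum_m a m *: R m.
  by apply: (span_lt k) => // j; have := ltn_ord j; lia.
elim=> [|t IHt] {}u {}Wu ut.
  exists (fun=> 0); rewrite big1 => [|m _]; last by rewrite scale0r.
  by apply/rowP => j; rewrite ut ?mxE.
case: (ltnP t k) => [tk | kt]; last by apply: IHt => // j; have := ltn_ord j; lia.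
pose m := Ordinal tk; have mE : (m : nat) = t by [].
have [WR sR Rm _] := redR m.
have /e_gen um : lead_ideal m (u ord0 m).
  by exists u; split => // j mj; apply: ut; lia.
have [||a' u'E] := IHt (u - u ord0 m *: R m).
- by apply: WB => //; apply: WZ.
- move=> j tj; rewrite !mxE; case: (ltnP m j) => [mj | jm].
    by rewrite (ut j) ?(sR j) ?mulr0 ?subr0 //; lia.
  have -> : j = m by apply: val_inj => /=; lia.
  by rewrite Rm -um subrr.
exists (fun i => a' i + (i == m)%:R * u ord0 m).
under eq_bigr do rewrite scalerDl.
rewrite big_split /= -u'E (bigD1 m) //= eqxx mul1r big1 ?addr0 ?subrK //.
by move=> i /negbTE ->; rewrite mul0r scale0r.
Qed.

End Reduced.

Lemma galois_descent u : W u ->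
  exists (a : 'I_k -> L) (d : 'I_k -> 'rV[L]_k),
    [/\ forall m, W (d m), forall m g, Gam g -> map_mx g (d m) = d m &
         u = \sum_m a m *: d m].
Proof.
move=> Wu.
have /fin_all_exists[e e_spec] := fun m : 'I_k =>
  @noetherian_idempotent_generator L _ Lflat Lnoeth (lead_ideal_is_ideal m).
have e_lead m : lead_ideal m (e m) by case: (e_spec m).
have e_idem m : e m * e m = e m by case: (e_spec m).
have e_gen m : forall x, lead_ideal m x -> x = x * e m by case: (e_spec m).
have /fin_all_exists[R redR] := reduced_exists _ e_lead e_idem.
have [a ->] := reduced_span _ e_gen _ redR _ Wu.
exists a, R; split => // m; first by case: (redR m).
by move=> g Gg; exact: (reduced_fixed _ e_lead e_gen _ _ _ Gg (redR m)).
Qed.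

End GaloisDescent.

Arguments galois_descent {L k Gam W}.

Section MpolyVanishing.

Variables (L : comNzRingType) (N : nat) (X : Type).
Variables (P : X -> Prop) (pt : X -> 'I_N -> L) (Gam : (L -> L) -> Prop).
Hypotheses (Lflat : absolutely_flat L) (Lnoeth : noetherian L).
Hypothesis Gam_raut : forall {g}, Gam g -> is_raut g.
Hypothesis Gam_into :
  forall g x, Gam g -> P x -> exists2 y, P y & g \o pt x =1 pt y.
Hypothesis Gam_onto :
  forall g y, Gam g -> P y -> exists2 x, P x & g \o pt x =1 pt y.
Variable f : {mpoly L[N]}.

Let ms := msupp f.

Definition monomial_col (v : 'I_N -> L) : 'cV[L]_(size ms) :=
  \col_i \prod_(j < N) v j ^+ nth 0%MM ms i j.

Definition coef_row : 'rV[L]_(size ms) := \row_i f@_(nth 0%MM ms i).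

Lemma meval_coef_row v : f.@[v] = (coef_row *m monomial_col v) ord0 ord0.
Proof.
rewrite mevalE (big_nth 0%MM) big_mkord mxE.
by apply: eq_bigr => i _; rewrite !mxE.
Qed.

Lemma raut_monomial_col g v :
  is_raut g -> map_mx g (monomial_col v) = monomial_col (g \o v).
Proof.
move=> gaut; apply/matrixP => i j; rewrite !mxE.
rewrite -[g _]/(raut_rmorphism gaut _) rmorph_prod.
by apply: eq_bigr => l _; rewrite rmorphXn.
Qed.

Lemma eq_monomial_col {v w} : v =1 w -> monomial_col v = monomial_col w.
Proof.
by move=> vw; apply/matrixP => i j; rewrite !mxE; apply: eq_bigr => l _; rewrite vw.
Qed.

Definition annihilates (u : 'rV[L]_(size ms)) :=
  forall x, P x -> u *m monomial_col (pt x) = 0.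

Lemma annihilates_Gam g u : Gam g -> annihilates u <-> annihilates (map_mx g u).
Proof.
move=> Gg; have gaut := Gam_raut Gg.
split=> [Wu y Py | Wgu x Px].
- have [x Px gxy] := Gam_onto _ _ Gg Py.
  rewrite -(eq_monomial_col gxy) -raut_monomial_col // -raut_map_mxM //.
  by rewrite Wu // raut_map_mx0.
- have [y Py gxy] := Gam_into _ _ Gg Px.
  apply: (raut_map_mx_inj gaut); rewrite raut_map_mx0 // raut_map_mxM //.
  by rewrite raut_monomial_col // (eq_monomial_col gxy) Wgu.
Qed.

Lemma mpoly_vanishing_transfer g0 x y :
  (forall z, P z -> f.@[pt z] = 0) -> is_raut g0 ->
  (forall a, (forall g, Gam g -> g a = a) -> g0 a = a) ->
  P x -> g0 \o pt x =1 pt y -> f.@[pt y] = 0.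
Proof.
move=> f0 g0aut g0fix Px g0xy.
have Wf : annihilates coef_row.
  by move=> z Pz; apply/rowP => i; rewrite ord1 -meval_coef_row f0 // mxE.
suff fy0 : coef_row *m monomial_col (pt y) = 0 by rewrite meval_coef_row fy0 mxE.
have [|||a [d [Wd Gd ->]]] :=
  galois_descent Lflat Lnoeth _ _ _ (@Gam_raut) annihilates_Gam _ Wf.
- by move=> z _; rewrite mul0mx.
- by move=> u v Wu Wv z Pz; rewrite mulmxDl Wu // Wv // addr0.
- by move=> c u Wu z Pz; rewrite -scalemxAl Wu // scaler0.
rewrite mulmx_suml big1 // => m _; rewrite -scalemxAl.
have g0d : map_mx g0 (d m) = d m.
  apply/matrixP => i j; rewrite mxE g0fix // => g Gg.
  by rewrite -[in RHS](Gd m g Gg) mxE.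
rewrite -(eq_monomial_col g0xy) -raut_monomial_col // -g0d -raut_map_mxM // Wd //.
by rewrite raut_map_mx0 // scaler0.
Qed.

End MpolyVanishing.

Arguments mpoly_vanishing_transfer {L N X P pt Gam}.

Lemma meval_map_mpoly (R S : comNzRingType) (h : {rmorphism R -> S}) N
    (p : {mpoly R[N]}) (v : 'I_N -> R) :
  (map_mpoly h p).@[h \o v] = h p.@[v].
Proof.
rewrite (map_mpolyE h (leqnn (msize p))) [in RHS](mpolywE (leqnn (msize p))).
rewrite !(big_morph _ (mevalD _) (meval0 _)) rmorph_sum; apply: eq_bigr => m _.
rewrite !mevalZ !mevalX rmorphM rmorph_prod; congr (_ * _).
by apply: eq_bigr => i _; rewrite rmorphXn.
Qed.

Section MatrixPoints.

Variables (gT : finGroupType) (n : nat).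

Definition mx_point {R : comNzRingType} (act : gT -> {rmorphism R -> R})
    (M : 'M[R]_n) (v : 'I_(nmvars gT n)) : R :=
  let: (i, j, g) := enum_val v in act g (M i j).

Lemma eval_mxE (R : comNzRingType) (act : gT -> {rmorphism R -> R}) M p :
  eval_mx act M p = p.@[mx_point act M].
Proof. by []. Qed.

Lemma raut_mx_point (R : comNzRingType) (act : gT -> {rmorphism R -> R})
    (gam : R -> R) (M : 'M[R]_n) :
  (forall g x, gam (act g x) = act g (gam x)) ->
  gam \o mx_point act M =1 mx_point act (map_mx gam M).
Proof.
move=> gam_act v; rewrite /mx_point /=.
by case: (enum_val v) => [[i j] g]; rewrite gam_act mxE.
Qed.

Section Translate.

Variables (C L : comNzRingType) (actC : gT -> {rmorphism C -> C}).
Variables (actL : gT -> {rmorphism L -> L}) (psi : {rmorphism C -> L}).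
Hypothesis psi_act : forall g c, psi (actC g c) = actL g (psi c).

(* Substitute for the variable (i, j, g) the linear form giving the (i, j, g)
   coordinate of [Fi *m Y] in terms of the coordinates of [Y]. *)
Lemma mpoly_translate (F Fi : 'M[L]_n) (p : {mpoly C[nmvars gT n]}) :
  Fi *m F = 1%:M ->
  exists f : {mpoly L[nmvars gT n]}, forall M,
    f.@[mx_point actL (F *m map_mx psi M)] = psi (eval_mx actC M p).
Proof.
move=> FiF.
pose lin (v : 'I_(nmvars gT n)) : {mpoly L[nmvars gT n]} :=
  let: (i, j, g) := enum_val v in
  \sum_(l < n) (actL g (Fi i l))%:MP * 'X_(enum_rank (l, j, g)).
have linE Y v : (lin v).@[mx_point actL Y] = mx_point actL (Fi *m Y) v.
  rewrite {2}/mx_point /lin; case: (enum_val v) => [[i j] g].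
  rewrite mxE rmorph_sum rmorph_sum; apply: eq_bigr => l _.
  by rewrite /= mevalM mevalC mevalXU /mx_point enum_rankK rmorphM.
exists (map_mpoly psi p \mPo [tuple lin v | v < nmvars gT n]) => M.
rewrite comp_mpoly_meval eval_mxE -meval_map_mpoly; apply: meval_eq => v.
rewrite tnth_mktuple linE mulmxA FiF mul1mx /mx_point /=.
by case: (enum_val v) => [[i j] g]; rewrite mxE psi_act.
Qed.

End Translate.
End MatrixPoints.

Arguments mx_point {gT n R} act M v.
Arguments mpoly_translate {gT n C L actC actL psi} psi_act {F Fi} p.

Lemma aut_mx_point (gT : finGroupType) n (C L : comNzRingType)
    (actL : gT -> {rmorphism L -> L}) (psi : {rmorphism C -> L})
    (F : 'M[L]_n) (gam : L -> L) (Mg M : 'M[C]_n) :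
  is_raut gam -> (forall g x, gam (actL g x) = actL g (gam x)) ->
  (forall c, gam (psi c) = psi c) -> aut_matrix psi F gam Mg ->
  gam \o mx_point actL (F *m map_mx psi M) =1
    mx_point actL (F *m map_mx psi (Mg *m M)).
Proof.
move=> gaut gact gpsi gF v; rewrite raut_mx_point // raut_map_mxM // gF.
have -> : map_mx gam (map_mx psi M) = map_mx psi M.
  by apply/matrixP => i j; rewrite !mxE.
by rewrite map_mxM mulmxA.
Qed.

Theorem proposition18 (gT : finGroupType) (Hab : abelian [set: gT])
  (C K L : comRingType)
  (actC : gT -> {rmorphism C -> C})
  (sigmaK : {rmorphism K -> K}) (actK : gT -> {rmorphism K -> K})
  (sigmaL : {rmorphism L -> L}) (actL : gT -> {rmorphism L -> L})
  (iota : {rmorphism C -> K}) (phi : {rmorphism K -> L})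
  (n : nat) (A : 'M[K]_n) (F : 'M[L]_n)
  (G H : 'M[C]_n -> Prop) :
  (* K is a Noetherian Sigma-pseudofield *)
  is_Sig_action sigmaK actK -> Sig_pseudofield sigmaK actK -> noetherian K ->
  (* C = K^sigma (via iota), a Sigma_1-closed pseudofield with the induced action *)
  injective iota ->
  (forall c, sigmaK (iota c) = iota c) ->
  (forall x, sigmaK x = x -> exists c, x = iota c) ->
  (forall g c, iota (actC g c) = actK g (iota c)) ->
  is_Sig1_action actC -> Sig1_closed actC ->
  (* A in GL_n(K), L a PV pseudofield with fundamental matrix F *)
  is_GL A ->
  is_PV_pseudofield sigmaK actK sigmaL actL phi A F ->
  (* G = Aut_Sigma(L/K) embedded in GL_n(C) *)
  (forall M, G M <-> exists gam, is_Sig_aut_over phi sigmaL actL gam /\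
                         aut_matrix (phi \o iota) F gam M) ->
  (* H is a subgroup of G *)
  (forall M, H M -> G M) -> H 1%:M ->
  (forall M N, H M -> H N -> H (M *m N)) ->
  (forall M, H M -> exists N, H N /\ M *m N = 1%:M) ->
  (* H is closed *)
  (exists E : {mpoly C[nmvars gT n]} -> Prop,
     forall M, H M <-> (G M /\ forall p, E p -> eval_mx actC M p = 0)) ->
  (* L^H = K *)
  (forall x : L,
     (forall gam M, is_Sig_aut_over phi sigmaL actL gam -> H M ->
        aut_matrix (phi \o iota) F gam M -> gam x = x) ->
     exists y : K, x = phi y) ->
  forall M, H M <-> G M.
Proof.
move=> _ _ _ iota_inj _ _ iota_act _ _ _ [[_ [Lflat _] Lnoeth] [[phi_inj _ phi_act]
  [[[Fi [_ FiF]] _] _]]] Gdef HG H1 HM Hinv [E Hdef] LH_fixed M.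
split=> [/HG // | GM]; apply/Hdef; split=> // p Ep.
pose psi : {rmorphism C -> L} := (phi \o iota)%FUN.
have psi_act g c : psi (actC g c) = actL g (psi c) by rewrite /= iota_act phi_act.
have [f fE] := mpoly_translate psi_act p FiF.
pose Gam gam := exists2 Mg, H Mg &
  is_Sig_aut_over phi sigmaL actL gam /\ aut_matrix psi F gam Mg.
have Gam_raut gam : Gam gam -> is_raut gam by case=> Mg _ [[]].
pose pt M' := mx_point actL (F *m map_mx psi M').
have Gam_pt gam Mg M' : is_Sig_aut_over phi sigmaL actL gam ->
    aut_matrix psi F gam Mg -> gam \o pt M' =1 pt (Mg *m M').
  by case=> gaut _ gact gphi; apply: aut_mx_point => // c; rewrite /= gphi.
have [g0 [g0aut g0F]] := (Gdef M).1 GM.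
suff psi0 : psi (eval_mx actC M p) = 0.
  by apply: (inj_comp phi_inj iota_inj); rewrite [LHS]psi0 /= !rmorph0.
rewrite -fE; apply: (mpoly_vanishing_transfer (P := H) (Gam := Gam) (pt := pt)
  Lflat Lnoeth Gam_raut _ _ f g0 1%:M M).
- move=> gam x [Mg HMg [gaut gF]] Hx.
  by exists (Mg *m x); [exact: HM | exact: Gam_pt].
- move=> gam y [Mg HMg [gaut gF]] Hy; have [Ni [HNi MgNi]] := Hinv _ HMg.
  exists (Ni *m y); first exact: HM.
  by move=> v; rewrite (Gam_pt _ _ _ gaut gF) mulmxA MgNi mul1mx.
- by move=> z /Hdef[_ Ez0]; rewrite /= fE Ez0 // rmorph0.
- by case: g0aut.
- move=> a afix; have [b ->] : exists b, a = phi b.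
    by apply: LH_fixed => gam M' gaut HM' gF; apply: afix; exists M'.
  by case: g0aut => _ _ _ ->.
- exact: H1.
- by move=> v; rewrite (Gam_pt _ _ _ g0aut g0F) mulmx1.
Qed.
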